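(* Assume the setting of the context, with $\Delta x\sim h$. Then for all $\Delta=(h,\Delta x)$ sufficiently small, the solution $V^\Delta=(V^\Delta_{i,j})$ of the scheme, i.e. the bounded solution of $\mathcal{F}^\Delta_j(x_i,(V^\Delta_{i,j},V^\Delta_{i,\bar\jmath}),V^\Delta_{\cdot,j})=0$ for all $i\in\mathbb{N}$, $j=1,2$, is nondecreasing in $i$ for each $j$.
   Context: Constants: $\rho>0$, $r<\rho$, $0<y_1<y_2$, $\gamma>1$, $\underline{x}\le0$ with $\rho\underline{x}+y_j>0$, $\lambda_1,\lambda_2\ge0$; $\bar\jmath=3-j$; $u(c)=\frac{c^{1-\gamma}}{1-\gamma}$ for $c>0$, $u(0)=-\infty$. Discretization $\Delta=(h,\Delta x)$, $h,\Delta x>0$, $\rho h<1$, $\lambda_jh<1$; ''$\Delta x\sim h$'' means $h/\Delta x$ stays between two fixed positive constants as $\Delta\to0$. Grid $x_i=\underline{x}+i\Delta x$, $i\in\mathbb{N}=\{0,1,\dots\}$. $\beta_k(x)=\max\{0,1-|x-x_k|/\Delta x\}$ for $x\ge\underline{x}$. $\mathcal{C}^\Delta_j(x_i)=\{c\ge0:x_i+h(rx_i+y_j-c)\ge\underline{x}\}$, $s_{i,j}(c)=rx_i+y_j-c$. Scheme: $$\mathcal{F}^\Delta_j(x_i,(\mathsf{q}_j,\mathsf{q}_{\bar\jmath}),\mathsf{U})=\rho\mathsf{q}_j-(1-\rho h)\lambda_j(\mathsf{q}_{\bar\jmath}-\mathsf{q}_j)-\sup_{c\in\mathcal{C}^\Delta_j(x_i)}\Big\{u(c)+\frac{(1-\rho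 h)(1-\lambda_jh)}{h}\Big(\sum_k\beta_k(x_i+hs_{i,j}(c))\mathsf{U}_k-\mathsf{q}_j\Big)\Big\}.$$ This scheme has a unique bounded solution. *)

From HB Require Import structures.
From mathcomp Require Import all_boot all_order all_algebra.
From mathcomp Require Import all_classical all_reals.
From mathcomp Require Import ereal topology normedtype sequences exp.
Set Implicit Arguments. Unset Strict Implicit. Unset Printing Implicit Defensive.
Import Order.TTheory GRing.Theory Num.Theory numFieldNormedType.Exports.
Local Open Scope classical_set_scope.
Local Open Scope ring_scope.

(* Regimes j = 1,2 are encoded by j : 'I_2 (ord 0 <-> j=1, ord 1 <-> j=2). *)
Definition jbar (j : 'I_2) : 'I_2 := rev_ord j.

Definition util {R : realType} (gamma c : R) : \bar R :=
  if 0 < c then (powR c (1 - gamma) / (1 - gamma))%:E else -oo%E.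

Definition grid {R : realType} (xl dx : R) (i : nat) : R := xl + i%:R * dx.

Definition beta {R : realType} (xl dx : R) (k : nat) (x : R) : R :=
  Num.max 0 (1 - `|x - grid xl dx k| / dx).

Definition interp {R : realType} (xl dx : R) (U : nat -> R) (x : R) : R :=
  limn (fun n => \sum_(0 <= k < n) beta xl dx k x * U k).

Definition Cadm {R : realType} (r xl h dx yj : R) (i : nat) : set R :=
  [set c | 0 <= c /\ xl <= grid xl dx i + h * (r * grid xl dx i + yj - c)].

(* The scheme F^Delta_j(x_i, (q_j, q_jbar), U), an extended real
   (the supremum may be -oo). *)
Definition Fscheme {R : realType} (rho r gamma xl : R) (y lam : 'I_2 -> R)
    (h dx : R) (j : 'I_2) (i : nat) (qj qjb : R) (U : nat -> R) : \bar R :=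
  let xi := grid xl dx i in
  ((rho * qj - (1 - rho * h) * lam j * (qjb - qj))%:E -
   ereal_sup [set (util gamma c +
       ((1 - rho * h) * (1 - lam j * h) / h *
          (interp xl dx U (xi + h * (r * xi + y j - c)) - qj))%:E)%E
     | c in Cadm r xl h dx (y j) i])%E.

From HB Require Import structures.
From mathcomp Require Import all_boot all_order all_algebra.
From mathcomp Require Import all_classical all_reals.
From mathcomp Require Import ereal topology normedtype sequences exp.
From mathcomp Require Import ring lra zify.
Import Order.TTheory GRing.Theory Num.Theory numFieldNormedType.Exports.
Local Open Scope classical_set_scope.
Local Open Scope ring_scope.

(* Let D be the infimum over i, j of the increments V_{i+1,j} - V_{i,j}.
   Every consumption admissible at x_i is admissible at x_{i+1}, and it moves
   the target point x_i + h s_{i,j}(c) to the right by (1 + r h) dx, along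
   which the linear interpolant gains at least (1 + r h) D. Comparing the
   scheme at x_i and x_{i+1} gives a_j (V_{i+1,j} - V_{i,j}) >= c_j D with
   0 < c_j < a_j, the last inequality because r < rho. Hence if D < 0 every
   increment is at least q D > D with q = max_j c_j / a_j < 1, contradicting
   the choice of D. The mesh only has to be small enough that 1 + r h > 0. *)

Section Interpolation.
Context {R : realType} {xl dx : R}.
Hypothesis dx_gt0 : 0 < dx.

Lemma beta_between_nodes (k m : nat) (t : R) : 0 <= t < 1 ->
  beta xl dx m (xl + (k%:R + t) * dx) =
  if m == k then 1 - t else if m == k.+1 then t else 0.
Proof.
move=> /andP[t_ge0 t_lt1]; rewrite /beta /grid.
have -> : xl + (k%:R + t) * dx - (xl + m%:R * dx) = (k%:R + t - m%:R) * dx.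
  by ring.
rewrite normrM (gtr0_norm dx_gt0) mulfK; last by rewrite gt_eqF.
have [->|m_ne_k] := eqVneq m k.
  by rewrite addrAC subrr add0r ger0_norm //; apply/max_idPr; lra.
have [->|m_ne_k1] := eqVneq m k.+1.
  rewrite -natr1 ler0_norm; last lra.
  have -> : 1 - - (k%:R + t - (k%:R + 1)) = t by ring.
  by apply/max_idPr.
apply/max_idPl; have [m_lt_k|k_lt_m] := ltnP m k.
  have : m.+1%:R <= k%:R :> R by rewrite ler_nat.
  by rewrite -natr1 => ?; rewrite ger0_norm; lra.
have : k.+2%:R <= m%:R :> R.
  by rewrite ler_nat ltn_neqAle eq_sym m_ne_k1 ltn_neqAle eq_sym m_ne_k.
by rewrite -addn2 natrD => ?; rewrite ler0_norm; lra.
Qed.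

Lemma interp_partial_sum (U : nat -> R) (k n : nat) (t : R) :
  0 <= t < 1 -> (k.+2 <= n)%N ->
  \sum_(0 <= m < n) beta xl dx m (xl + (k%:R + t) * dx) * U m =
  (1 - t) * U k + t * U k.+1.
Proof.
move=> t01 /subnK <-; elim: (n - k.+2)%N => [|p IHp].
  rewrite add0n !big_nat_recr //= !beta_between_nodes // eqxx.
  rewrite (gtn_eqF (ltnSn k)) eqxx big_nat_cond big1 ?add0r // => m.
  rewrite andbT => /andP[_ m_lt_k].
  rewrite beta_between_nodes // (ltn_eqF m_lt_k).
  by rewrite (ltn_eqF (leqW m_lt_k)) mul0r.
rewrite addSn big_nat_recr //= IHp beta_between_nodes //.
have /negbTE -> : (p + k.+2 != k)%N by apply/eqP; lia.
have /negbTE -> : (p + k.+2 != k.+1)%N by apply/eqP; lia.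
by rewrite mul0r addr0.
Qed.

Lemma interp_between_nodes (U : nat -> R) (k : nat) (t : R) : 0 <= t < 1 ->
  interp xl dx U (xl + (k%:R + t) * dx) = U k + t * (U k.+1 - U k).
Proof.
move=> t01; rewrite /interp.
have -> : U k + t * (U k.+1 - U k) = (1 - t) * U k + t * U k.+1 by ring.
apply: lim_near_cst => //; exists k.+2 => // n /= k2_le_n.
exact: interp_partial_sum.
Qed.

Lemma interp_truncn (U : nat -> R) (x : R) : 0 <= x ->
  interp xl dx U (xl + x * dx) =
  U (Num.truncn x) +
  (x - (Num.truncn x)%:R) * (U (Num.truncn x).+1 - U (Num.truncn x)).
Proof.
move=> x_ge0; have := truncn_itv x_ge0; rewrite -natr1 => /andP[? ?].
rewrite -[in LHS](subrKC (Num.truncn x)%:R x) interp_between_nodes //.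
by apply/andP; split; lra.
Qed.

Lemma interp_nondecreasing (U : nat -> R) {x z : R} :
  (forall k, U k <= U k.+1) -> 0 <= x -> x <= z ->
  interp xl dx U (xl + x * dx) <= interp xl dx U (xl + z * dx).
Proof.
move=> /nondecreasing_seqP U_mono x_ge0 x_le_z.
have z_ge0 := le_trans x_ge0 x_le_z.
rewrite !interp_truncn //.
have := truncn_itv x_ge0; have := truncn_itv z_ge0; rewrite -!natr1.
have := le_truncn x_le_z.
set k := Num.truncn x; set m := Num.truncn z => k_le_m /andP[? ?] /andP[? ?].
have Uk := U_mono k k.+1 (leqnSn k); have Um := U_mono m m.+1 (leqnSn m).
have [k_lt_m|->] : (k < m)%N \/ k = m by lia.
  by have := U_mono _ _ k_lt_m; nra.
by nra.
Qed.

Lemma interp_sub_linear (U : nat -> R) (D x : R) : 0 <= x ->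
  interp xl dx (fun k => U k - D * k%:R) (xl + x * dx) =
  interp xl dx U (xl + x * dx) - D * x.
Proof. by move=> x_ge0; rewrite !interp_truncn // -natr1; ring. Qed.

Lemma interp_incr_ge {U : nat -> R} {D p q : R} :
  (forall k, D <= U k.+1 - U k) -> xl <= p -> p <= q ->
  D * (q - p) / dx <= interp xl dx U q - interp xl dx U p.
Proof.
move=> U_incr xl_le_p p_le_q.
have coord z : z = xl + (z - xl) / dx * dx.
  by rewrite divfK ?gt_eqF // addrC subrK.
have p_ge0 : 0 <= (p - xl) / dx by rewrite divr_ge0 ?subr_ge0 // ltW.
have pq : (p - xl) / dx <= (q - xl) / dx by rewrite ler_pM2r ?invr_gt0 ?lerD2r.
have W_mono k : U k - D * k%:R <= U k.+1 - D * k.+1%:R.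
  by rewrite -natr1; have := U_incr k; lra.
have := interp_nondecreasing (fun k => U k - D * k%:R) W_mono p_ge0 pq.
rewrite !interp_sub_linear ?(le_trans p_ge0 pq) // -!coord.
have -> : D * (q - p) / dx = D * ((q - xl) / dx - (p - xl) / dx).
  by field; rewrite gt_eqF.
lra.
Qed.

End Interpolation.

Definition scheme_weight {R : realType} (rho h lamj : R) : R :=
  (1 - rho * h) * (1 - lamj * h) / h.

Definition jump_weight {R : realType} (rho h lamj : R) : R :=
  (1 - rho * h) * lamj.

Definition contraction_ratio {R : realType} (rho r h lamj : R) : R :=
  (jump_weight rho h lamj + scheme_weight rho h lamj * (1 + r * h)) /
  (rho + jump_weight rho h lamj + scheme_weight rho h lamj).

Section SchemeComparison.
Context {R : realType} {rho r gamma xl h dx : R} {y lam : 'I_2 -> R}.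
Context {j : 'I_2}.
Hypotheses (rho_gt0 : 0 < rho) (r_lt_rho : r < rho).
Hypotheses (h_gt0 : 0 < h) (dx_gt0 : 0 < dx) (drift_gt0 : 0 < 1 + r * h).
Hypotheses (rhoh_lt1 : rho * h < 1) (lamh_lt1 : lam j * h < 1).
Hypothesis lam_ge0 : 0 <= lam j.

Local Notation K := (scheme_weight rho h (lam j)).
Local Notation b := (jump_weight rho h (lam j)).
Local Notation target i c := (grid xl dx i + h * (r * grid xl dx i + y j - c)).

Lemma scheme_weight_gt0 : 0 < K.
Proof. by rewrite divr_gt0 // mulr_gt0 // subr_gt0. Qed.

Lemma jump_weight_ge0 : 0 <= b.
Proof. by rewrite mulr_ge0 // subr_ge0 ltW. Qed.

Lemma target_succ (i : nat) (c : R) :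
  target i.+1 c = target i c + (1 + r * h) * dx.
Proof. by rewrite /grid -natr1; ring. Qed.

Lemma Cadm_succ (i : nat) (c : R) :
  Cadm r xl h dx (y j) i c -> Cadm r xl h dx (y j) i.+1 c.
Proof.
move=> [c_ge0 xl_le]; split => //.
rewrite target_succ.
by have := mulr_gt0 drift_gt0 dx_gt0; lra.
Qed.

Lemma contraction_ratio_lt1 : contraction_ratio rho r h (lam j) < 1.
Proof.
have K_pos := scheme_weight_gt0; have b_pos := jump_weight_ge0.
have rho_pos := rho_gt0.
rewrite /contraction_ratio ltr_pdivrMr ?mul1r; last lra.
have Kh : K * h = (1 - rho * h) * (1 - lam j * h).
  by rewrite /scheme_weight mulfVK ?gt_eqF.
have lamh_ge0 : 0 <= lam j * h by rewrite mulr_ge0 // ltW.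
have rhoh_gt0 : 0 < rho * h by rewrite mulr_gt0.
have Kh_gt0 : 0 < K * h by rewrite mulr_gt0.
have Kh_le1 : K * h <= 1.
  by rewrite Kh; move: rhoh_lt1 lamh_lt1 => ? ?; nra.
suff : r * (K * h) < rho by lra.
have := r_lt_rho; have [r_le0|r_gt0] := lerP r 0; nra.
Qed.

Context {U W : nat -> R} {D : R}.
Hypotheses (U_incr : forall k, D <= U k.+1 - U k).
Hypotheses (W_incr : forall k, D <= W k.+1 - W k).
Hypothesis U_solves :
  forall i, Fscheme rho r gamma xl y lam h dx j i (U i) (W i) U = 0%E.

Local Notation X i := (rho * U i - b * (W i - U i)).
Local Notation term i c :=
  (util gamma c + (K * (interp xl dx U (target i c) - U i))%:E)%E.

Lemma scheme_sup (i : nat) :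
  ereal_sup [set term i c | c in Cadm r xl h dx (y j) i] = (X i)%:E.
Proof.
by move: (U_solves i) => /eqP; rewrite /Fscheme /= sube_eq // add0e => /eqP.
Qed.

Lemma term_le_succ (i : nat) (c : R) : Cadm r xl h dx (y j) i c ->
  (term i c <= (X i.+1 - K * (1 + r * h) * D + K * (U i.+1 - U i))%:E)%E.
Proof.
move=> c_adm; have term_succ_le : (term i.+1 c <= (X i.+1)%:E)%E.
  rewrite -scheme_sup; apply: ereal_sup_ubound.
  by exists c => //; exact: Cadm_succ.
move: term_succ_le; rewrite /util; case: ifP => _.
  2: by move=> _; rewrite addNye leNye.
rewrite -!EFinD !lee_fin.
have gain : D * (1 + r * h) <=
    interp xl dx U (target i.+1 c) - interp xl dx U (target i c).
  have target_le : target i c <= target i.+1 c.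
    by rewrite target_succ lerDl mulr_ge0 // ltW.
  have := interp_incr_ge dx_gt0 U_incr (proj2 c_adm) target_le.
  by rewrite target_succ addrAC subrr add0r mulrA mulfK ?lt0r_neq0.
have := ler_wpM2l (ltW scheme_weight_gt0) gain; lra.
Qed.

Lemma scheme_lhs_le_succ (i : nat) :
  X i <= X i.+1 - K * (1 + r * h) * D + K * (U i.+1 - U i).
Proof.
rewrite -lee_fin -scheme_sup.
by apply/ereal_supP => _ [c c_adm <-]; exact: term_le_succ.
Qed.

Lemma scheme_incr_ge (i : nat) :
  contraction_ratio rho r h (lam j) * D <= U i.+1 - U i.
Proof.
have a_gt0 : 0 < rho + b + K.
  by have := scheme_weight_gt0; have := jump_weight_ge0; have := rho_gt0; lra.
rewrite /contraction_ratio mulrAC ler_pdivrMr //.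
have := scheme_lhs_le_succ i; have := ler_wpM2l jump_weight_ge0 (W_incr i); lra.
Qed.

End SchemeComparison.

Lemma small_step_drift_gt0 {R : realType} {r h : R} :
  0 < h -> h < (`|r| + 1)^-1 -> 0 < 1 + r * h.
Proof.
move=> h_gt0; have r1_gt0 : 0 < `|r| + 1 by rewrite ltr_wpDl.
rewrite -(ltr_pM2l r1_gt0) mulfV ?gt_eqF //.
by have := ler_norm (- r); rewrite normrN; nra.
Qed.

Lemma le_max_ord2 {R : realType} (f : 'I_2 -> R) (j : 'I_2) :
  f j <= Num.max (f ord0) (f ord_max).
Proof.
suff : j = ord0 \/ j = ord_max by case=> ->; rewrite le_max lexx ?orbT.
by case: j => -[|[|//]] ?; [left|right]; apply/val_inj.
Qed.

Lemma inf_ge0_contraction {R : realType} {S : set R} {q : R} :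
  S !=set0 -> has_lbound S -> q < 1 ->
  (inf S < 0 -> lbound S (q * inf S)) -> 0 <= inf S.
Proof.
move=> S0 S_lb q_lt1 contract; rewrite leNgt; apply/negP => inf_lt0.
have := lb_le_inf S0 (contract inf_lt0); nra.
Qed.

Theorem mainTheorem15 (R : realType) (rho r gamma xl : R) (y lam : 'I_2 -> R) :
  0 < rho -> r < rho -> 0 < y ord0 -> y ord0 < y ord_max -> 1 < gamma ->
  xl <= 0 -> (forall j, 0 < rho * xl + y j) -> (forall j, 0 <= lam j) ->
  forall c1 c2 : R, 0 < c1 -> c1 <= c2 ->
  exists delta : R, 0 < delta /\
    forall h dx : R, 0 < h -> h < delta -> 0 < dx -> dx < delta ->
      c1 <= h / dx <= c2 ->
      rho * h < 1 -> (forall j, lam j * h < 1) ->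
      forall V : nat -> 'I_2 -> R,
        (exists M : R, forall i j, `|V i j| <= M) ->
        (forall i j, Fscheme rho r gamma xl y lam h dx j i
                       (V i j) (V i (jbar j)) (fun k => V k j) = 0%E) ->
        forall j i, V i j <= V i.+1 j.
Proof.
move=> rho_gt0 r_lt_rho _ _ _ _ _ lam_ge0 c1 c2 _ _.
exists (`|r| + 1)^-1; split; first by rewrite invr_gt0 ltr_wpDl.
move=> h dx h_gt0 h_lt dx_gt0 _ _ rhoh_lt1 lamh_lt1 V [M V_bdd] V_solves.
have drift_pos := small_step_drift_gt0 h_gt0 h_lt.
pose S := [set V ij.1.+1 ij.2 - V ij.1 ij.2 | ij in [set: nat * 'I_2]].
have S_lb : has_lbound S.
  exists (- (M + M)) => _ [[i j] _ <-] /=.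
  by move: (V_bdd i j) (V_bdd i.+1 j); rewrite !ler_norml; lra.
have incr_ge_inf i j : inf S <= V i.+1 j - V i j.
  by apply: ge_inf => //; exists (i, j).
pose ratio j := contraction_ratio rho r h (lam j).
pose q := Num.max (ratio ord0) (ratio ord_max).
have q_lt1 : q < 1 by rewrite /q /ratio gt_max !contraction_ratio_lt1.
have S_n0 : S !=set0 by exists (V 1%N ord0 - V 0%N ord0), (0%N, ord0).
have : 0 <= inf S.
  apply: (inf_ge0_contraction S_n0 S_lb q_lt1) => inf_lt0 _ [[i j] _ <-] /=.
  apply: le_trans (scheme_incr_ge rho_gt0 h_gt0 dx_gt0 drift_pos rhoh_lt1
    (lamh_lt1 j) (lam_ge0 j) (incr_ge_inf^~ j) (incr_ge_inf^~ (jbar j))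
    (V_solves^~ j) i).
  by rewrite ler_nM2r // (le_max_ord2 ratio).
by move=> inf_ge0 j i; have := incr_ge_inf i j; lra.
Qed.
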